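(* In the production planning setting described in the context (general case, intervals may overlap), for every fixed $\pmb{x}\in\mathbb{X}$ the adversarial problem $\max_{\pmb{D}\in\mathcal{U}^d}\sum_{t\in[T]}\max\{f_I(X_t,D_t),f_B(X_t,D_t)\}$ has an optimal solution $\pmb{D}^*\in\mathcal{U}^d$ such that for every $k\in[T]$, $$D^*_k\in\mathcal{D}_k=[\widehat{D}_k-\Delta_k,\widehat{D}_k+\Delta_k]\cap\bigcup_{t\in[T]}\{\widehat{D}_t-\Delta_t,\widehat{D}_t,\widehat{D}_t+\Delta_t\}.$$
   Context: There are $T\ge 1$ periods, $[T]=\{1,\dots,T\}$. Given are a production cost $c^P$, an inventory cost $c^I$, a backordering cost $c^B$ and a selling price $b^P$ (independent of the period), and a set $\mathbb{X}\subseteq\mathbb{R}^T_+$ of feasible production plans $\pmb{x}=(x_1,\dots,x_T)$ described by finitely many linear constraints. For a plan write $X_t=\sum_{i\in[t]}x_i$. For $t\in[T-1]$ let $f_I(X_t,D_t)=c^I(X_t-D_t)$ and $f_B(X_t,D_t)=c^B(D_t-X_t)$; for $t=T$ let $f_I(X_T,D_T)=c^I(X_T-D_T)+c^PX_T-b^PD_T$ and $f_B(X_T,D_T)=c^B(D_T-X_T)+c^PX_T-b^PX_T$. Nominal cumulative demands $\widehat{D}_t\ge 0$ satisfy $\widehat{D}_t\le\widehat{D}_{t+1}$, and deviations satisfy $0\le\Delta_t\le\widehat{D}_t$. The discrete budgeted scenario set is $\mathcal{U}^d=\{\pmb{D}\in\mathbb{R}^T: D_t\le D_{t+1}\ (t\in[T-1]),\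 D_t\in[\widehat{D}_t-\Delta_t,\widehat{D}_t+\Delta_t]\ (t\in[T]),\ |\{t: D_t\ne\widehat{D}_t\}|\le\Gamma^d\}$ with integer $\Gamma^d\in\{0,\dots,T\}$. No non-overlapping assumption on the intervals is made. *)

From HB Require Import structures.
From mathcomp Require Import all_boot all_order all_algebra.
From mathcomp Require Import reals.
Set Implicit Arguments. Unset Strict Implicit. Unset Printing Implicit Defensive.
Import Order.TTheory GRing.Theory Num.Theory.
Local Open Scope ring_scope.

(* Periods 1..T are represented by 'I_T = {0,...,T-1}; period T is T.-1. *)

Definition feasible_plan (R : realType) (T m : nat)
  (A : 'M[R]_(m, T)) (b : 'cV[R]_m) (x : 'I_T -> R) : Prop :=
  (forall t, 0 <= x t) /\
  (forall i : 'I_m, \sum_(t < T) A i t * x t <= b i 0).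

Definition cumX (R : realType) (T : nat) (x : 'I_T -> R) (t : 'I_T) : R :=
  \sum_(i < T | (i <= t)%N) x i.

Definition fI (R : realType) (T : nat) (cP cI bP : R) (t : 'I_T) (Xt Dt : R) : R :=
  if (t == T.-1 :> nat) then cI * (Xt - Dt) + cP * Xt - bP * Dt
  else cI * (Xt - Dt).

Definition fB (R : realType) (T : nat) (cP cB bP : R) (t : 'I_T) (Xt Dt : R) : R :=
  if (t == T.-1 :> nat) then cB * (Dt - Xt) + cP * Xt - bP * Xt
  else cB * (Dt - Xt).

Definition adv_cost (R : realType) (T : nat) (cP cI cB bP : R)
  (x D : 'I_T -> R) : R :=
  \sum_(t < T) Num.max (fI cP cI bP t (cumX x t) (D t))
                       (fB cP cB bP t (cumX x t) (D t)).

Definition in_Ud (R : realType) (T : nat) (Dhat Delta : 'I_T -> R)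
  (Gamma : nat) (D : 'I_T -> R) : Prop :=
  (forall (t : 'I_T) (Ht : (t.+1 < T)%N), D t <= D (Ordinal Ht)) /\
  (forall t, Dhat t - Delta t <= D t <= Dhat t + Delta t) /\
  (#|[set t : 'I_T | D t != Dhat t]| <= Gamma)%N.

Definition in_calD (R : realType) (T : nat) (Dhat Delta : 'I_T -> R)
  (k : 'I_T) (v : R) : Prop :=
  (Dhat k - Delta k <= v <= Dhat k + Delta k) /\
  (exists t : 'I_T, v = Dhat t - Delta t \/ v = Dhat t \/ v = Dhat t + Delta t).

From HB Require Import structures.
From mathcomp Require Import all_boot all_order all_algebra.
From mathcomp Require Import boolp reals.
From mathcomp Require Import ring lra.
Set Implicit Arguments.
Unset Strict Implicit.
Unset Printing Implicit Defensive.

Import Order.TTheory GRing.Theory Num.Theory.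
Local Open Scope ring_scope.

(* The cost is convex in the scenario D, being a sum of maxima of functions
   affine in D.  Call a coordinate D t "off" if it is not one of the finitely
   many candidate values Dhat s, Dhat s +- Delta s.  Stretch every off
   coordinate away from the largest candidate below it by a common factor l:
   this fixes the candidate coordinates, never moves a coordinate across a
   candidate and keeps the order inside each gap, so it stays in U^d for
   0 <= l <= l0, where at l0 a first off coordinate reaches the candidate above
   it.  D is a convex combination of the scenarios for l = 0 and l = l0, both
   with fewer off coordinates, so one of them costs at least as much as D.
   Iterating, every scenario is dominated by one with all coordinates among
   the candidates; these are finitely many, and a best one is optimal. *)

Section ConvexCost.
Variables (R : realType) (T : nat) (cP cI cB bP : R) (x : 'I_T -> R).

Lemma fI_affine (t : 'I_T) X l u w :
  fI cP cI bP t X ((1 - l) * u + l * w) =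
  (1 - l) * fI cP cI bP t X u + l * fI cP cI bP t X w.
Proof. by rewrite /fI; case: ifP => _; ring. Qed.

Lemma fB_affine (t : 'I_T) X l u w :
  fB cP cB bP t X ((1 - l) * u + l * w) =
  (1 - l) * fB cP cB bP t X u + l * fB cP cB bP t X w.
Proof. by rewrite /fB; case: ifP => _; ring. Qed.

Lemma adv_cost_convex (D L H : 'I_T -> R) l : 0 <= l <= 1 ->
  (forall t, D t = (1 - l) * L t + l * H t) ->
  adv_cost cP cI cB bP x D <=
  (1 - l) * adv_cost cP cI cB bP x L + l * adv_cost cP cI cB bP x H.
Proof.
move=> /andP[l_ge0 l_le1] DE; rewrite /adv_cost !mulr_sumr -big_split /=.
apply: ler_sum => t _; rewrite DE fI_affine fB_affine.
have l'_ge0 : 0 <= 1 - l by rewrite subr_ge0.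
by rewrite ge_max; apply/andP; split; apply: lerD; apply: ler_wpM2l;
  rewrite // le_max lexx ?orbT.
Qed.

Lemma adv_cost_le_max (D L H : 'I_T -> R) l : 0 <= l <= 1 ->
  (forall t, D t = (1 - l) * L t + l * H t) ->
  adv_cost cP cI cB bP x D <=
  Num.max (adv_cost cP cI cB bP x L) (adv_cost cP cI cB bP x H).
Proof.
move=> l01 DE; apply: le_trans (adv_cost_convex l01 DE) _.
case/andP: l01 => l_ge0 l_le1.
set u := adv_cost _ _ _ _ _ L; set w := adv_cost _ _ _ _ _ H.
by case: (leP u w) => uw; nra.
Qed.

End ConvexCost.

Section Neighbours.
Variable R : realType.
Implicit Types (s : seq R) (d v : R).

Definition prev_in s d v : R := \big[Num.max/d]_(c <- s | c < v) c.
Definition next_in s d v : R := \big[Num.min/d]_(c <- s | v < c) c.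

Lemma prev_inP s d v : d \in s -> d < v ->
  [/\ prev_in s d v \in s, prev_in s d v < v &
      forall c, c \in s -> c < v -> c <= prev_in s d v].
Proof.
move=> ds dv; split; last by move=> c cs cv; apply: le_bigmax_seq.
- rewrite /prev_in big_seq_cond; elim/big_ind: _ => // [c c'|c /andP[] //].
  by rewrite maxEle; case: ifP.
- exact: bigmax_lt.
Qed.

Lemma next_inP s d v : d \in s -> v < d ->
  [/\ next_in s d v \in s, v < next_in s d v &
      forall c, c \in s -> v < c -> next_in s d v <= c].
Proof.
move=> ds vd; split; last by move=> c cs vc; apply: ge_bigmin_seq.
- rewrite /next_in big_seq_cond; elim/big_ind: _ => // [c c'|c /andP[] //].
  by rewrite minEle; case: ifP.
- exact: lt_bigmin.
Qed.

End Neighbours.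

Lemma exists_argmax (R : realType) (I : finType) (P : I -> Prop) (F : I -> R)
    i0 :
  P i0 -> exists2 i, P i & forall j, P j -> F j <= F i.
Proof.
move=> /asboolT Pi0.
case: (@arg_maxP _ R I i0 (fun i => `[< P i >]) F Pi0) => i /asboolP Pi maxi.
by exists i => // j /asboolP; apply: maxi.
Qed.

Lemma lt_of_le_notin (R : realType) (s : seq R) c v :
  c \in s -> v \notin s -> c <= v -> c < v.
Proof.
by move=> cs vs; rewrite le_eqVlt => /predU1P[cv|//]; rewrite -cv cs in vs.
Qed.

Lemma gt_of_ge_notin (R : realType) (s : seq R) c v :
  c \in s -> v \notin s -> v <= c -> v < c.
Proof.
by move=> cs vs; rewrite le_eqVlt => /predU1P[vc|//]; rewrite vc cs in vs.
Qed.

Section Candidates.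
Variables (R : realType) (T : nat) (Dhat Delta : 'I_T -> R) (Gamma : nat).
Variables (cP cI cB bP : R) (x : 'I_T -> R).
Local Notation in_Ud := (in_Ud Dhat Delta Gamma).
Local Notation cost := (adv_cost cP cI cB bP x).

Definition candidates : seq R :=
  [seq Dhat t - Delta t | t <- enum 'I_T] ++ [seq Dhat t | t <- enum 'I_T] ++
  [seq Dhat t + Delta t | t <- enum 'I_T].
Local Notation C := candidates.

Lemma candidatesP v :
  reflect (exists t, v = Dhat t - Delta t \/ v = Dhat t \/ v = Dhat t + Delta t)
          (v \in C).
Proof.
rewrite !mem_cat; apply: (iffP or3P) => [|[t vt]].
  by case=> /mapP[t _ ->]; exists t; tauto.
by case: vt => [|[|]] ->; [apply: Or31 | apply: Or32 | apply: Or33];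
  apply: map_f; rewrite mem_enum.
Qed.

Lemma lower_mem_candidates t : Dhat t - Delta t \in C.
Proof. by apply/candidatesP; exists t; left. Qed.

Lemma nominal_mem_candidates t : Dhat t \in C.
Proof. by apply/candidatesP; exists t; right; left. Qed.

Lemma upper_mem_candidates t : Dhat t + Delta t \in C.
Proof. by apply/candidatesP; exists t; right; right. Qed.

Definition off_candidates (D : 'I_T -> R) := [set t | D t \notin C].

Lemma in_Ud_order_preserving (D E : 'I_T -> R) : in_Ud D ->
  (forall t, D t \in C -> E t = D t) ->
  (forall t c, c \in C -> c <= D t -> c <= E t) ->
  (forall t c, c \in C -> D t <= c -> E t <= c) ->
  (forall s t, D s <= D t -> E s <= E t) ->
  in_Ud E /\ off_candidates E \subset off_candidates D.
Proof.
move=> [D_mono [D_bnd D_supp]] E_fix E_ge E_le E_mono.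
have off_sub : off_candidates E \subset off_candidates D.
  by apply/subsetP => t; rewrite !inE; apply: contra => Dt; rewrite E_fix.
split=> //; split=> [t t_lt|]; first exact/E_mono/D_mono.
split=> [t|].
  case/andP: (D_bnd t) => D_ge D_le.
  by rewrite E_ge ?E_le ?lower_mem_candidates ?upper_mem_candidates.
apply: leq_trans D_supp; apply/subset_leq_card/subsetP => t; rewrite !inE.
by apply: contra => /eqP Dt; rewrite E_fix Dt ?nominal_mem_candidates.
Qed.

Lemma off_candidates_lt (D E : 'I_T -> R) t :
  off_candidates E \subset off_candidates D -> D t \notin C -> E t \in C ->
  (#|off_candidates E| < #|off_candidates D|)%N.
Proof.
move=> sub Dt Et; apply/proper_card/properP; split=> //.
by exists t; rewrite !inE ?Et.
Qed.

Section Stretch.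
Variable D : 'I_T -> R.
Hypothesis D_Ud : in_Ud D.

(* The defaults are candidates on the right side of D t, so [lo t] and [hi t]
   are the neighbours of D t among the candidates. *)
Let lo t := prev_in C (Dhat t - Delta t) (D t).
Let hi t := next_in C (Dhat t + Delta t) (D t).

Lemma lo_spec t : D t \notin C ->
  [/\ lo t \in C, lo t < D t & forall c, c \in C -> c < D t -> c <= lo t].
Proof.
have [_ [/(_ t)/andP[D_ge _] _]] := D_Ud.
move=> Dt; have lo_C := lower_mem_candidates t.
by apply/prev_inP/(lt_of_le_notin lo_C Dt D_ge).
Qed.

Lemma hi_spec t : D t \notin C ->
  [/\ hi t \in C, D t < hi t & forall c, c \in C -> D t < c -> hi t <= c].
Proof.
have [_ [/(_ t)/andP[_ D_le] _]] := D_Ud.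
move=> Dt; have hi_C := upper_mem_candidates t.
by apply/next_inP/(gt_of_ge_notin hi_C Dt D_le).
Qed.

Definition stretch (l : R) t :=
  if D t \in C then D t else lo t + l * (D t - lo t).

Definition admissible (l : R) :=
  0 <= l /\ forall t, D t \notin C -> l * (D t - lo t) <= hi t - lo t.

Lemma stretch_ge l t c : 0 <= l -> c \in C -> c <= D t -> c <= stretch l t.
Proof.
rewrite /stretch; case: ifPn => // Dt l_ge0 cC cD.
have [_ loD lo_max] := lo_spec Dt.
apply: le_trans (lo_max _ cC (lt_of_le_notin cC Dt cD)) _.
by rewrite lerDl mulr_ge0 // subr_ge0 ltW.
Qed.

Lemma stretch_le l t c :
  admissible l -> c \in C -> D t <= c -> stretch l t <= c.
Proof.
rewrite /stretch; case: ifPn => // Dt [_ adm] cC Dc.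
have [_ _ hi_min] := hi_spec Dt.
apply: le_trans (hi_min _ cC (gt_of_ge_notin cC Dt Dc)).
by rewrite -lerBrDl adm.
Qed.

Lemma stretch_mono l s t :
  admissible l -> D s <= D t -> stretch l s <= stretch l t.
Proof.
move=> adm Dst; have l_ge0 := adm.1.
case: (boolP (D s \in C)) => Ds; first by rewrite {1}/stretch Ds stretch_ge.
case: (boolP (D t \in C)) => Dt; first by rewrite {2}/stretch Dt stretch_le.
have [loC_s loD_s lo_max_s] := lo_spec Ds.
have [loC_t loD_t lo_max_t] := lo_spec Dt.
have [lo_t_Ds|Ds_lo_t] := ltP (lo t) (D s).
  have lo_st : lo s = lo t.
    apply/le_anti; rewrite lo_max_s ?lo_max_t //.
    exact: lt_le_trans loD_s Dst.
  rewrite /stretch (negbTE Ds) (negbTE Dt) lo_st lerD2l.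
  by apply: ler_wpM2l => //; rewrite lerD2r.
apply: le_trans (stretch_le adm loC_t Ds_lo_t) _.
exact: stretch_ge l_ge0 loC_t (ltW loD_t).
Qed.

Lemma stretch_in_Ud l : admissible l ->
  in_Ud (stretch l) /\ off_candidates (stretch l) \subset off_candidates D.
Proof.
move=> adm; apply: in_Ud_order_preserving => //.
- by move=> t Dt; rewrite /stretch Dt.
- by move=> t c; apply: stretch_ge; case: adm.
- by move=> t c; apply: stretch_le.
- by move=> s t; apply: stretch_mono.
Qed.

Lemma stretch_combination l : l != 0 ->
  forall t, D t = (1 - l^-1) * stretch 0 t + l^-1 * stretch l t.
Proof.
by move=> l_neq0 t; rewrite /stretch; case: ifP => _; [ring | field].
Qed.

Lemma exists_better_scenario t1 : D t1 \notin C ->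
  exists2 E, in_Ud E /\ (#|off_candidates E| < #|off_candidates D|)%N &
             cost D <= cost E.
Proof.
move=> Dt1; pose ratio t := (hi t - lo t) / (D t - lo t).
case: (@arg_minP _ R _ t1 [pred t | D t \notin C] ratio Dt1)
  => t0 /= Dt0 ratio_min.
set l := ratio t0.
have lo_hi t : D t \notin C -> 0 < D t - lo t < hi t - lo t.
  move=> Dt; have [_ loD _] := lo_spec Dt; have [_ hiD _] := hi_spec Dt.
  by rewrite subr_gt0 loD ltrD2r.
have /andP[D_lo0 D_hi0] := lo_hi t0 Dt0.
have l_gt1 : 1 < l by rewrite /l /ratio ltr_pdivlMr // mul1r.
have adm0 : admissible 0.
  split=> // t Dt; rewrite mul0r; case/andP: (lo_hi t Dt) => D_lo D_hi.
  exact/ltW/(lt_trans D_lo D_hi).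
have adm : admissible l.
  split=> [|t Dt]; first exact/ltW/(lt_trans ltr01).
  by rewrite -ler_pdivlMr; [exact: ratio_min | case/andP: (lo_hi t Dt)].
have [L_Ud L_off] := stretch_in_Ud adm0.
have [H_Ud H_off] := stretch_in_Ud adm.
have L_t1 : stretch 0 t1 \in C.
  by rewrite /stretch (negbTE Dt1) mul0r addr0; case: (lo_spec Dt1).
have H_t0 : stretch l t0 \in C.
  rewrite /stretch (negbTE Dt0) /l /ratio divfK ?gt_eqF // addrC subrK.
  by case: (hi_spec Dt0).
have l_neq0 : l != 0 by rewrite gt_eqF // (lt_trans ltr01).
have : cost D <= Num.max (cost (stretch 0)) (cost (stretch l)).
  apply: (adv_cost_le_max _ _ _ _ _ _ (stretch_combination l_neq0)).
  by rewrite invr_ge0 invf_le1 ?ltW // (lt_trans ltr01).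
rewrite le_max => /orP[costL|costH].
  exists (stretch 0) => //; split=> //.
  exact: off_candidates_lt L_off Dt1 L_t1.
exists (stretch l) => //; split=> //.
exact: off_candidates_lt H_off Dt0 H_t0.
Qed.

End Stretch.

Lemma exists_better_candidate_scenario D : in_Ud D ->
  exists2 E, in_Ud E /\ (forall t, E t \in C) & cost D <= cost E.
Proof.
move=> D_Ud; have [n] := ubnP #|off_candidates D|.
elim: n => // n IHn in D D_Ud * => off_lt.
case: (pickP [pred t | D t \notin C]) => [t1 /= Dt1 | all_C]; last first.
  by exists D => //; split=> // t; move/negbFE: (all_C t).
have [E [E_Ud E_lt] DE] := exists_better_scenario D_Ud Dt1.
have [F FC EF] := IHn E E_Ud (leq_trans E_lt (ltnSE off_lt)).
by exists F; last exact: le_trans DE EF.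
Qed.

Lemma nominal_in_Ud :
  (forall (t : 'I_T) (Ht : (t.+1 < T)%N), Dhat t <= Dhat (Ordinal Ht)) ->
  (forall t, 0 <= Delta t) -> in_Ud Dhat.
Proof.
move=> Dhat_mono Delta_ge0; split=> //; split=> [t|].
  by rewrite lerBlDr !lerDl Delta_ge0.
apply: (leq_trans _ (leq0n Gamma)); rewrite leqn0 cards_eq0.
by apply/eqP/setP => t; rewrite !inE eqxx.
Qed.

Lemma exists_optimal_candidate_scenario : in_Ud Dhat ->
  exists2 Dstar, in_Ud Dstar /\ (forall t, Dstar t \in C) &
                 forall D, in_Ud D -> cost D <= cost Dstar.
Proof.
move=> Dhat_Ud; pose scenario (f : {ffun 'I_T -> seq_sub C}) t := ssval (f t).
have scenarioK E (EC : forall t, E t \in C) :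
    scenario [ffun t => SeqSub (EC t)] = E.
  by apply/funext => t; rewrite /scenario ffunE.
have [fs fs_Ud fs_max] : exists2 fs, in_Ud (scenario fs) &
    forall f, in_Ud (scenario f) -> cost (scenario f) <= cost (scenario fs).
  apply: (@exists_argmax _ _ _ _ [ffun t => SeqSub (nominal_mem_candidates t)]).
  by rewrite scenarioK.
exists (scenario fs) => [|D D_Ud]; first by split=> // t; apply: ssvalP.
have [E [E_Ud EC] DE] := exists_better_candidate_scenario D_Ud.
apply: le_trans DE _; rewrite -(scenarioK E EC).
by apply: fs_max; rewrite scenarioK.
Qed.

End Candidates.

Theorem lemma3 (R : realType) (T : nat) (cP cI cB bP : R)
  (m : nat) (A : 'M[R]_(m, T)) (b : 'cV[R]_m)
  (Dhat Delta : 'I_T -> R) (Gamma : nat) (x : 'I_T -> R) :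
  (0 < T)%N ->
  (forall t, 0 <= Dhat t) ->
  (forall (t : 'I_T) (Ht : (t.+1 < T)%N), Dhat t <= Dhat (Ordinal Ht)) ->
  (forall t, 0 <= Delta t <= Dhat t) ->
  (Gamma <= T)%N ->
  feasible_plan A b x ->
  exists Dstar : 'I_T -> R,
    [/\ in_Ud Dhat Delta Gamma Dstar,
        (forall D, in_Ud Dhat Delta Gamma D ->
           adv_cost cP cI cB bP x D <= adv_cost cP cI cB bP x Dstar) &
        (forall k : 'I_T, in_calD Dhat Delta k (Dstar k))].
Proof.
(* Only Delta >= 0 and the monotonicity of Dhat matter: they make Dhat a
   scenario.  The plan x is arbitrary. *)
move=> _ _ Dhat_mono Delta_bnd _ _.
have Dhat_Ud : in_Ud Dhat Delta Gamma Dhat.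
  by apply: nominal_in_Ud => // t; case/andP: (Delta_bnd t).
have [Dstar [Dstar_Ud Dstar_C] Dstar_max] :=
  exists_optimal_candidate_scenario cP cI cB bP x Dhat_Ud.
exists Dstar; split=> // k; split; first by case: Dstar_Ud => _ [].
exact/candidatesP.
Qed.
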